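(* Let $a,N$ be integers with $1\le a\le N$. For any $n,d\in\mathbb{N}_0$, $c_1,\dots,c_d\in\mathbb{N}\setminus\{2\}$ and $b_0,\dots,b_d\in\mathbb{N}_0$, $${}_nt^{\star}_{N,a}(\{2\}^{b_0},c_1,\{2\}^{b_1},\dots,c_d,\{2\}^{b_d})=\sum_{n\ge k_0\ge k_1\ge\cdots\ge k_d\ge0}\frac{N\left[\left(\frac{a}{N}\right)_{n+1}\right]^2}{(n-k_0)!\left(\frac{2a}{N}\right)_{n+k_0+1}}\cdot\frac{\left(\frac{2a}{N}\right)_{k_d}}{k_d!(Nk_d+a)}\prod_{i=0}^{d}\frac{(-1)^{k_i\delta_i}}{(Nk_i+a)^{2b_i+3-\delta_i}}W_{k_{i-1},k_i}^{\#}(\{1\}^{c_i-3}),$$ where $k_{-1}=-1$, $c_0=1$, $c_{d+1}=0$ and $\delta_i=\delta(c_i)+\delta(c_{i+1})$.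
   Context: $(x)_m$ is the Pochhammer symbol. $\{s\}^c$ is $s$ repeated $c$ times if $c>0$ and empty otherwise. ${}_nt^{\star}_{N,a}(s_1,\dots,s_u)=\sum_{n\ge k_1\ge\cdots\ge k_u\ge0}\prod_{j}(Nk_j+a)^{-s_j}$, ${}_nt^{\star}_{N,a}(\emptyset)=1$. $\delta(0)=2$, $\delta(1)=1$, $\delta(c)=0$ for $c\ge3$. $\triangle(k,m)=0$ if $k=m$, $1$ otherwise. For an index $\boldsymbol{s}=(s_1,\dots,s_u)$ of positive integers and integers $k,m$: $W_{k,m}^{\#}(\boldsymbol{s})=\sum_{k\ge l_1\ge\cdots\ge l_u\ge m}2^{\triangle(k,l_1)+\triangle(l_1,l_2)+\cdots+\triangle(l_u,m)}\prod_j(Nl_j+a)^{-s_j}$ if $\boldsymbol{s}$ is nonempty and $k\ge m$, and $W_{k,m}^{\#}(\boldsymbol{s})=2^{\triangle(k,m)}$ otherwise. *)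

From HB Require Import structures.
From mathcomp Require Import all_boot all_order all_algebra.
Set Implicit Arguments. Unset Strict Implicit. Unset Printing Implicit Defensive.
Import Order.TTheory GRing.Theory Num.Theory.
Local Open Scope ring_scope.

Section Defs.
Variable R : realFieldType.

Definition poch (x : R) (m : nat) : R := \prod_(i < m) (x + i%:R).

Definition lin (N a : nat) (k : int) : R := ((N%:Z * k + a%:Z)%R)%:~R.

(* nt*_{N,a}(s_1,...,s_u) = sum_{n >= k_1 >= ... >= k_u >= 0} prod_j (N k_j + a)^{-s_j} *)
Fixpoint tstar (N a n : nat) (s : seq nat) : R :=
  match s with
  | [::] => 1
  | s1 :: r => \sum_(k < n.+1) (lin N a k ^ (- (s1%:Z))) * tstar N a k r
  end.

Definition tri (k m : int) : nat := if k == m then 0%N else 1%N.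

(* sum_{k >= l_1 >= ... >= l_u >= m} 2^{tri(k,l_1)+...+tri(l_u,m)} prod_j (N l_j + a)^{-s_j}
   (for k >= m; the empty chain gives 2^{tri(k,m)}) *)
Fixpoint Wrec (N a : nat) (k m : int) (s : seq nat) : R :=
  match s with
  | [::] => 2%:R ^+ tri k m
  | s1 :: r =>
      \sum_(j < (absz (k - m)).+1)
        if (m + j%:Z <= k)%R then
          2%:R ^+ tri k (m + j%:Z) * lin N a (m + j%:Z) ^ (- (s1%:Z))
            * Wrec N a (m + j%:Z) m r
        else 0
  end.

Definition Wsharp (N a : nat) (k m : int) (s : seq nat) : R :=
  if (s != [::]) && (m <= k)%R then Wrec N a k m s else 2%:R ^+ tri k m.

End Defs.

Definition deltaf (x : nat) : nat :=
  if x == 0%N then 2%N else if x == 1%N then 1%N else 0%N.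

Fixpoint chains (m len : nat) : seq (seq nat) :=
  match len with
  | 0 => [:: [::]]
  | l.+1 => flatten [seq [seq k :: t | t <- chains k l] | k <- iota 0 m.+1]
  end.

Definition tindex (d : nat) (c b : nat -> nat) : seq nat :=
  nseq (b 0%N) 2%N ++ flatten [seq c i :: nseq (b i) 2%N | i <- iota 1 d].

Definition cext (d : nat) (c : nat -> nat) (i : nat) : nat :=
  if i == 0%N then 1%N else if i == d.+1 then 0%N else c i.

Definition deltai (d : nat) (c : nat -> nat) (i : nat) : nat :=
  (deltaf (cext d c i) + deltaf (cext d c i.+1))%N.

Definition kprev (ks : seq nat) (i : nat) : int :=
  if i == 0%N then (-1)%R else (nth 0%N ks i.-1)%:Z.

From HB Require Import structures.
From mathcomp Require Import all_boot all_order all_algebra.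
From mathcomp Require Import ring zify.
Import Order.TTheory GRing.Theory Num.Theory.
Local Open Scope ring_scope.

(* Write [L k = N k + a] and [weight n k] for the first factor
   [N ((a/N)_{n+1})^2 / ((n-k)! (2a/N)_{n+k+1})] of the summand.  In terms of [L] the
   weights obey rational recurrences in [n] and in [k], under which
   [\sum_{k <= m <= n} weight m k / L m^2 = weight n k / L k^2] telescopes; summing by
   parts with it turns [\sum_j weight n j g j] into
   [\sum_m L m^-2 \sum_{j <= m} weight m j L j^2 g j].  Telescoping in [j] evaluates
   [\sum_{j >= k} weight m j L j] and its alternating twin, hence
   [\sum_j weight m j L j^2 kernel c j k = weight m k L m^(2-c)] for c = 1, c = 2 and,
   by induction through [W^#({1}^(c-3))], c >= 3; it also gives
   [\sum_j weight n j coef0 j = 1].  So [t*_n(s) = \sum_k weight n k coef s k] by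
   induction on s, where [coef (c :: s) j = \sum_k kernel c j k coef s k]; unfolding [coef]
   along ({2}^b_0, c_1, ..., c_d, {2}^b_d) gives the sum over chains n >= k_0 >= ... >= k_d. *)

Section BigSums.
Context {V : zmodType}.

Lemma sum_ord_widen m n (F : nat -> V) : (m <= n)%N ->
    (forall j, (m < j)%N -> F j = 0) ->
  \sum_(j < m.+1) F j = \sum_(j < n.+1) F j.
Proof.
move=> mn F0; rewrite (big_ord_widen n.+1 F) ?ltnS // big_mkcond /=.
by apply: eq_bigr => j _; case: ifPn => // jm; rewrite F0 // ltnNge -ltnS.
Qed.

Lemma sum_ord_if_geq m k (F : nat -> V) :
  \sum_(j < m) (if (k <= j)%N then F j else 0) = \sum_(k <= j < m) F j.
Proof. by rewrite big_geq_mkord [RHS]big_mkcond. Qed.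

Lemma sum_ord_shift l k (F : nat -> V) : (k <= l)%N ->
  \sum_(i < (l - k).+1) F (k + i)%N = \sum_(j < l.+1) (if (k <= j)%N then F j else 0).
Proof.
move=> kl; rewrite sum_ord_if_geq -[X in \sum_(X <= j < _) _]add0n big_addn big_mkord.
by rewrite subSn //; apply: eq_bigr => i _; rewrite addnC.
Qed.

Lemma telescope_sum_ord m k (f B : nat -> V) : (k <= m)%N ->
    (forall j, (k <= j <= m)%N -> f j = B j - B j.+1) -> B m.+1 = 0 ->
  \sum_(j < m.+1) (if (k <= j)%N then f j else 0) = B k.
Proof.
move=> km fE Bm; rewrite sum_ord_if_geq.
rewrite (telescope_sumr_eq (fun j => - B j)) ?Bm ?oppr0 ?sub0r ?opprK //;
  first exact: leqW.
by move=> j jm; rewrite fE ?opprK 1?addrC // -ltnS.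
Qed.

Lemma sum_triangle_exchange m k (F : nat -> nat -> V) :
  \sum_(j < m.+1) (if (k <= j)%N then \sum_(l < j.+1) (if (k <= l)%N then F j l else 0) else 0)
  = \sum_(l < m.+1) (if (k <= l)%N then \sum_(j < m.+1) (if (l <= j)%N then F j l else 0) else 0).
Proof.
pose G j l := if (k <= l <= j)%N then F j l else 0.
transitivity (\sum_(j < m.+1) \sum_(l < m.+1) G j l); last first.
  rewrite exchange_big; apply: eq_bigr => l _ /=; case: ifPn => kl.
    by apply: eq_bigr => j _; rewrite /G kl.
  by rewrite big1 // => j _; rewrite /G (negbTE kl).
apply: eq_bigr => [[j jm]] _ /=; case: ifPn => kj; last first.
  rewrite big1 // => l _; rewrite /G; case: ifP => // /andP [kl lj].
  by rewrite (leq_trans kl lj) in kj.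
transitivity (\sum_(l < j.+1) G j l).
  by apply: eq_bigr => [[l lj]] _; rewrite /G /= -[(l <= j)%N]ltnS lj andbT.
apply: (@sum_ord_widen j m (G j)) => [|l jl]; first by rewrite -ltnS.
by rewrite /G [(l <= j)%N]leqNgt jl andbF.
Qed.

Lemma sum_iota0 n (F : nat -> V) : \sum_(k <- iota 0 n) F k = \sum_(k < n) F k.
Proof. by rewrite -{1}(subn0 n) -/(index_iota 0 n) big_mkord. Qed.

Lemma sum_chainsS m l (F : seq nat -> V) :
  \sum_(ks <- chains m l.+1) F ks = \sum_(k < m.+1) \sum_(t <- chains k l) F ((k : nat) :: t).
Proof.
have -> : chains m l.+1 =
    flatten [seq [seq k :: t | t <- chains k l] | k <- iota 0 m.+1] by [].
by rewrite big_flatten big_map sum_iota0; apply: eq_bigr => k _; rewrite big_map.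
Qed.

End BigSums.

Lemma sum_geq_tri {R : pzRingType} m k (F : nat -> R) : (k <= m)%N ->
  \sum_(j < m.+1) (if (k <= j)%N then F j * 2%:R ^+ tri j k else 0) =
  2 * \sum_(j < m.+1) (if (k <= j)%N then F j else 0) - F k.
Proof.
move=> km.
have Fk : F k = \sum_(j < m.+1) (if (j : nat) == k then F j else 0).
  by rewrite -big_mkcond big_ord1_eq ltnS km.
rewrite Fk mulr_sumr -sumrB; apply: eq_bigr => j _.
case: (eqVneq (j : nat) k) => [->|jk].
  by rewrite leqnn /tri !eqxx expr0 mulr1 mulr_natl mulr2n addrK.
rewrite /tri eqz_nat (negbTE jk) expr1 subr0.
by case: ifP => _; rewrite ?mulr_natr ?mulr_natl ?mul0rn.
Qed.

Lemma prodr_ord_recl {R : pzSemiRingType} n (F : nat -> R) :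
  \prod_(i < n.+1) F i = F 0%N * \prod_(i < n) F i.+1.
Proof. by rewrite big_ord_recl. Qed.

Lemma prodr_ord_recl2 {R : pzSemiRingType} n (F : nat -> R) :
  \prod_(i < n.+2) F i = F 0%N * (F 1%N * \prod_(i < n) F i.+2).
Proof. by rewrite !big_ord_recl. Qed.

Lemma sign_sqr {R : pzRingType} k : (-1) ^+ k * (-1) ^+ k = 1 :> R.
Proof. by rewrite -expr2 sqrr_sign. Qed.

Lemma pochS {R : realFieldType} (z : R) m : poch z m.+1 = poch z m * (z + m%:R).
Proof. by rewrite /poch big_ord_recr. Qed.

Lemma poch_gt0 {R : realFieldType} (z : R) m : 0 < z -> 0 < poch z m.
Proof. by move=> z_gt0; rewrite /poch; apply: prodr_gt0 => i _; exact: ltr_wpDr. Qed.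

Lemma deltaf_le2 x : (deltaf x <= 2)%N.
Proof. by rewrite /deltaf; case: ifP => //; case: ifP. Qed.

Lemma tindex_pos d (c b : nat -> nat) :
    (forall i, (1 <= i <= d)%N -> (1 <= c i)%N /\ c i <> 2%N) ->
  all (fun x => 0 < x)%N (tindex d c b).
Proof.
move=> c_ok; apply/allP => x; rewrite /tindex mem_cat => /orP [/nseqP [-> _] // |].
move=> /flattenP [s /mapP [i i_d ->]]; rewrite in_cons => /orP [/eqP -> | /nseqP [-> _] //].
by case: (c_ok i) => //; move: i_d; rewrite mem_iota add1n ltnS.
Qed.

Lemma tindex_cons d (c b : nat -> nat) :
  tindex d.+1 c b =
  nseq (b 0%N) 2%N ++ c 1%N :: tindex d (fun i => c i.+1) (fun i => b i.+1).
Proof.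
rewrite /tindex.
have -> : iota 1 d.+1 = 1%N :: [seq i.+1 | i <- iota 1 d] by rewrite /= -(iotaDl 1 1 d).
by rewrite map_cons -map_comp.
Qed.

Section Weights.
Context {R : realFieldType} {a N : nat}.
Hypothesis a_gt0 : (0 < a)%N.
Hypothesis a_leN : (a <= N)%N.

Definition alpha : R := a%:R / N%:R.

(* [L k = N k + a], locked so that [field] treats it as an atom. *)
Fact L_key : unit. Proof. exact: tt. Qed.
Definition L (k : nat) : R := locked_with L_key (lin R N a k).

Lemma linL (k : nat) : lin R N a k = L k.
Proof. by rewrite /L unlock. Qed.

Lemma lin_exprN (k c : nat) : lin R N a k ^ (- c%:Z) = (L k ^+ c)^-1.
Proof. by rewrite -exprnN linL. Qed.

Lemma lin_exprB (k p q : nat) : (q <= p)%N -> lin R N a k ^ (p%:Z - q%:Z) = L k ^+ (p - q).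
Proof. by move=> qp; rewrite subzn // -exprnP linL. Qed.

Lemma N_gt0 : 0 < N%:R :> R.
Proof. by rewrite ltr0n (leq_trans a_gt0 a_leN). Qed.

Lemma N_neq0 : N%:R != 0 :> R.
Proof. by rewrite gt_eqF ?N_gt0. Qed.

Lemma alpha_gt0 : 0 < alpha.
Proof. by rewrite divr_gt0 ?N_gt0 ?ltr0n. Qed.

Lemma L_def k : L k = N%:R * (k%:R + alpha).
Proof. by rewrite -linL /lin intrD intrM /= /alpha; field; rewrite N_neq0. Qed.

Lemma L_gt0 k : 0 < L k.
Proof. by rewrite L_def mulr_gt0 ?N_gt0 // ltr_wpDl ?alpha_gt0. Qed.

Lemma L_neq0 k : L k != 0.
Proof. by rewrite gt_eqF ?L_gt0. Qed.

Lemma L_exp_neq0 k e : L k ^+ e != 0.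
Proof. by rewrite expf_neq0 ?L_neq0. Qed.

Lemma L_add_neq0 j k : L j + L k != 0.
Proof. by rewrite gt_eqF ?addr_gt0 ?L_gt0. Qed.

Lemma ltr_L j k : (k < j)%N -> L k < L j.
Proof. by move=> kj; rewrite !L_def ltr_pM2l ?N_gt0 // ltrD2r ltr_nat. Qed.

Lemma L_sub_neq0 j k : (k < j)%N -> L j - L k != 0.
Proof. by move=> kj; rewrite subr_eq0 gt_eqF ?ltr_L. Qed.

Lemma alpha_addn k : alpha + k%:R = L k / N%:R.
Proof. by rewrite L_def; field; rewrite N_neq0. Qed.

Lemma two_alpha_addn j k : 2 * alpha + (j + k)%:R = (L j + L k) / N%:R.
Proof. by rewrite !L_def natrD; field; rewrite N_neq0. Qed.

Lemma natrB_L j k : (k <= j)%N -> (j - k)%:R = (L j - L k) / N%:R.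
Proof. by move=> kj; rewrite !L_def natrB //; field; rewrite N_neq0. Qed.

Lemma two_alpha_gt0 : 0 < 2 * alpha.
Proof. exact: mulr_gt0 (ltr0Sn _ 1) alpha_gt0. Qed.

Lemma poch_two_alpha_neq0 m : poch (2 * alpha) m != 0.
Proof. by rewrite gt_eqF ?poch_gt0 ?two_alpha_gt0. Qed.

Lemma natr_fact_neq0 m : m`!%:R != 0 :> R.
Proof. by rewrite pnatr_eq0 -lt0n fact_gt0. Qed.

Definition weight (n k : nat) : R :=
  if (k <= n)%N then
    N%:R * poch alpha n.+1 ^+ 2 / ((n - k)`!%:R * poch (2 * alpha) (n + k).+1)
  else 0.

Lemma weight_eq0 n k : (n < k)%N -> weight n k = 0.
Proof. by move=> nk; rewrite /weight leqNgt nk. Qed.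

Lemma weightSn n k : (k <= n)%N ->
  weight n.+1 k = weight n k * L n.+1 ^+ 2 / ((L n.+1 - L k) * (L n.+1 + L k)).
Proof.
move=> kn; rewrite /weight kn (leqW kn) /= subSn // factS natrM -subSn //.
rewrite (pochS alpha n.+1) addSn (pochS (2 * alpha) (n + k).+1) -addSn.
rewrite two_alpha_addn alpha_addn (natrB_L _ _ (leqW kn)).
by field; rewrite ?N_neq0 ?L_add_neq0 ?(L_sub_neq0 n.+1 k kn) ?poch_two_alpha_neq0
  ?natr_fact_neq0.
Qed.

Lemma weightSk m j : (j < m)%N ->
  weight m j.+1 = weight m j * (L m - L j) / (L m + L j.+1).
Proof.
move=> jm; rewrite /weight jm (ltnW jm) /= -(subnSK jm) factS natrM subnSK //.
rewrite addnS (pochS (2 * alpha) (m + j).+1) -addnS two_alpha_addn.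
rewrite (natrB_L _ _ (ltnW jm)).
by field; rewrite ?N_neq0 ?L_add_neq0 ?(L_sub_neq0 m j jm) ?poch_two_alpha_neq0
  ?natr_fact_neq0.
Qed.

Lemma sum_weight_div_sqr n k :
  \sum_(m < n.+1) weight m k / L m ^+ 2 = weight n k / L k ^+ 2.
Proof.
elim: n => [|n IH].
  by rewrite big_ord1; case: k => [|k] //; rewrite weight_eq0 ?mul0r.
rewrite big_ord_recr /= IH; case: (ltngtP k n.+1) => [kn|nk|->].
- rewrite weightSn //.
  by field; rewrite ?L_neq0 ?L_add_neq0 ?(L_sub_neq0 n.+1 k kn).
- by rewrite (weight_eq0 _ _ (ltnW nk)) (weight_eq0 _ _ nk) !mul0r addr0.
- by rewrite weight_eq0 // mul0r add0r.
Qed.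

Lemma sum_weight_by_parts n (g : nat -> R) :
  \sum_(j < n.+1) weight n j * g j =
  \sum_(m < n.+1) (L m ^+ 2)^-1 * \sum_(j < m.+1) weight m j * (L j ^+ 2 * g j).
Proof.
transitivity (\sum_(m < n.+1) \sum_(j < n.+1)
    (L m ^+ 2)^-1 * (weight m j * (L j ^+ 2 * g j))); last first.
  apply: eq_bigr => [[m mn]] _ /=; rewrite big_distrr /=; symmetry.
  apply: (@sum_ord_widen _ m n (fun j => (L m ^+ 2)^-1 * (weight m j * (L j ^+ 2 * g j))))
    => [|j mj]; first by rewrite -ltnS.
  by rewrite weight_eq0 // !mul0r mulr0.
rewrite exchange_big /=; apply: eq_bigr => j _.
transitivity ((\sum_(m < n.+1) weight m j / L m ^+ 2) * (L j ^+ 2 * g j)).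
  by rewrite sum_weight_div_sqr; field; rewrite ?L_neq0 ?L_exp_neq0.
by rewrite big_distrl; apply: eq_bigr => m _ /=; ring.
Qed.

Lemma sum_weight_L m k : (k <= m)%N ->
  \sum_(j < m.+1) (if (k <= j)%N then weight m j * L j else 0) =
  weight m k * (L m + L k) / 2.
Proof.
move=> km; apply: (telescope_sum_ord m k (fun j => weight m j * L j)
  (fun j => weight m j * (L m + L j) / 2)) => // [j /andP [kj jm]|]; last first.
  by rewrite weight_eq0 // !mul0r.
case: (ltngtP j m) => [jm'|mj|->] /=.
- by rewrite weightSk //; field; rewrite ?L_add_neq0 ?pnatr_eq0.
- by rewrite ltnNge jm in mj.
- by rewrite (weight_eq0 m m.+1) // !mul0r subr0; field; rewrite ?pnatr_eq0.
Qed.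

Lemma sum_sign_weight m k : (k <= m)%N ->
  \sum_(j < m.+1) (if (k <= j)%N then (-1) ^+ j * weight m j else 0) =
  (-1) ^+ k * weight m k * (L m + L k) / (2 * L m).
Proof.
move=> km; apply: (telescope_sum_ord m k (fun j => (-1) ^+ j * weight m j)
  (fun j => (-1) ^+ j * weight m j * (L m + L j) / (2 * L m)))
  => // [j /andP [kj jm]|]; last first.
  by rewrite weight_eq0 // !(mulr0, mul0r).
case: (ltngtP j m) => [jm'|mj|->] /=.
- by rewrite weightSk // exprS; field; rewrite ?L_neq0 ?L_add_neq0 ?pnatr_eq0.
- by rewrite ltnNge jm in mj.
- by rewrite (weight_eq0 m m.+1) // !(mulr0, mul0r) subr0; field; rewrite ?L_neq0 ?pnatr_eq0.
Qed.

Lemma sum_weight_L_tri m k : (k <= m)%N ->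
  \sum_(j < m.+1) (if (k <= j)%N then weight m j * L j * 2%:R ^+ tri j k else 0) =
  weight m k * L m.
Proof.
by move=> km; rewrite (sum_geq_tri m k (fun j => weight m j * L j)) // sum_weight_L //; field.
Qed.

Lemma sum_sign_weight_tri m k : (k <= m)%N ->
  \sum_(j < m.+1) (if (k <= j)%N then (-1) ^+ j * weight m j * 2%:R ^+ tri j k else 0) =
  (-1) ^+ k * L k * weight m k / L m.
Proof.
move=> km; rewrite (sum_geq_tri m k (fun j => (-1) ^+ j * weight m j)) // sum_sign_weight //.
by field; rewrite ?L_neq0.
Qed.

Fixpoint Wones (u j k : nat) : R :=
  match u with
  | 0 => 2%:R ^+ tri j k
  | u'.+1 => \sum_(l < j.+1) (if (k <= l)%N then 2%:R ^+ tri j l / L l * Wones u' l k else 0)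
  end.

Lemma sum_sign_weight_Wones u m k : (k <= m)%N ->
  \sum_(j < m.+1) (if (k <= j)%N then (-1) ^+ j * weight m j * Wones u j k else 0) =
  (-1) ^+ k * L k * weight m k / L m ^+ u.+1.
Proof.
elim: u m k => [|u IH] m k km; first by rewrite sum_sign_weight_tri // expr1.
pose F (j l : nat) := (-1) ^+ j * weight m j * (2%:R ^+ tri j l / L l * Wones u l k).
transitivity (\sum_(j < m.+1) (if (k <= j)%N then
    \sum_(l < j.+1) (if (k <= l)%N then F j l else 0) else 0)).
  apply: eq_bigr => j _; case: ifP => // _; rewrite /= big_distrr /=.
  by apply: eq_bigr => l _; case: ifP; rewrite ?mulr0.
rewrite sum_triangle_exchange.
transitivity (\sum_(l < m.+1) (L m)^-1 *
    (if (k <= l)%N then (-1) ^+ l * weight m l * Wones u l k else 0)); last first.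
  by rewrite -big_distrr /= IH // !exprS; field; rewrite ?L_neq0 ?L_exp_neq0.
apply: eq_bigr => [[l lm]] _ /=; case: ifP => kl; last by rewrite mulr0.
have lm' : (l <= m)%N by rewrite -ltnS.
transitivity (Wones u l k / L l * \sum_(j < m.+1)
    (if (l <= j)%N then (-1) ^+ j * weight m j * 2%:R ^+ tri j l else 0)).
  rewrite big_distrr; apply: eq_bigr => j _ /=; case: ifP => _; last by rewrite mulr0.
  by rewrite /F; field; rewrite ?L_neq0.
by rewrite sum_sign_weight_tri //; field; rewrite ?L_neq0.
Qed.

Definition kernel (c j k : nat) : R :=
  if (k <= j)%N then
    if c == 1%N then 2%:R ^+ tri j k / L j
    else if c == 2%N then (if j == k then (L k ^+ 2)^-1 else 0)
    else (-1) ^+ (j + k) * Wones (c - 3) j k / (L j ^+ 2 * L k)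
  else 0.

Lemma kernel_eq0 c j k : (j < k)%N -> kernel c j k = 0.
Proof. by move=> jk; rewrite /kernel leqNgt jk. Qed.

Lemma kernel1 j k : (k <= j)%N -> kernel 1 j k = 2%:R ^+ tri j k / L j.
Proof. by move=> kj; rewrite /kernel kj. Qed.

Lemma kernel2 j k : kernel 2 j k = if j == k then (L k ^+ 2)^-1 else 0.
Proof. by rewrite /kernel; case: (eqVneq j k) => [->|]; rewrite ?leqnn //; case: ifP. Qed.

Lemma kernelS3 u j k : (k <= j)%N ->
  kernel u.+3 j k = (-1) ^+ (j + k) * Wones u j k / (L j ^+ 2 * L k).
Proof. by move=> kj; rewrite /kernel kj /= ?subSS subn0. Qed.

Lemma sum_weight_kernel c m k : (0 < c)%N -> (k <= m)%N ->
  \sum_(j < m.+1) weight m j * (L j ^+ 2 * kernel c j k) =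
  weight m k * L m ^+ 2 / L m ^+ c.
Proof.
case: c => [//|[|[|u]]] _ km.
- transitivity (\sum_(j < m.+1)
      (if (k <= j)%N then weight m j * L j * 2%:R ^+ tri j k else 0)).
    apply: eq_bigr => j _; case: (leqP k j) => kj; last by rewrite kernel_eq0 ?mulr0.
    by rewrite kernel1 //; field; rewrite ?L_neq0.
  by rewrite sum_weight_L_tri //; field; rewrite ?L_neq0.
- transitivity (\sum_(j < m.+1 | j == k :> nat) weight m j).
    rewrite [RHS]big_mkcond; apply: eq_bigr => j _; rewrite kernel2 eq_sym.
    by case: eqP => [->|_]; [field; rewrite ?L_neq0 | rewrite !mulr0].
  by rewrite big_ord1_eq ltnS km; field; rewrite ?L_neq0.
- transitivity ((-1) ^+ k / L k * \sum_(j < m.+1)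
      (if (k <= j)%N then (-1) ^+ j * weight m j * Wones u j k else 0)).
    rewrite big_distrr /=; apply: eq_bigr => j _.
    case: (leqP k j) => kj; last by rewrite kernel_eq0 //= !mulr0.
    by rewrite kernelS3 // exprD; field; rewrite ?L_neq0.
  rewrite sum_sign_weight_Wones //.
  transitivity ((-1) ^+ k * (-1) ^+ k * (weight m k * L m ^+ 2 / L m ^+ u.+3)).
    by rewrite !exprS; field; rewrite ?L_neq0 ?L_exp_neq0.
  by rewrite sign_sqr mul1r.
Qed.

Lemma sum_weight_div_pow c n k : (0 < c)%N ->
  \sum_(m < n.+1) weight m k / L m ^+ c = \sum_(j < n.+1) weight n j * kernel c j k.
Proof.
move=> c_gt0; rewrite (sum_weight_by_parts n (fun j => kernel c j k)).
apply: eq_bigr => [[m mn]] _ /=; case: (leqP k m) => km.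
  by rewrite sum_weight_kernel //; field; rewrite ?L_neq0 ?L_exp_neq0.
rewrite weight_eq0 // mul0r big1 ?mulr0 // => j _.
by rewrite kernel_eq0 ?mulr0 // (leq_trans (ltn_ord j) km).
Qed.

Definition coef0 (j : nat) : R :=
  2 * (-1) ^+ j * poch (2 * alpha) j / (j`!%:R * L j).

Lemma coef0S j :
  coef0 j.+1 = - coef0 j * L j * (L j + L 0) / (L j.+1 * (L j.+1 - L 0)).
Proof.
have twoE : 2 * alpha + j%:R = (L j + L 0) / N%:R by rewrite -two_alpha_addn addn0.
have jE : j.+1%:R = (L j.+1 - L 0) / N%:R :> R by rewrite -natrB_L ?subn0.
rewrite /coef0 pochS factS natrM exprS twoE jE.
by field; rewrite ?L_neq0 ?N_neq0 ?natr_fact_neq0 ?(L_sub_neq0 j.+1 0).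
Qed.

Lemma sum_weight_Lsqr_coef0 m : (0 < m)%N ->
  \sum_(j < m.+1) weight m j * (L j ^+ 2 * coef0 j) = 0.
Proof.
move=> m_gt0; have Lm0 := L_sub_neq0 m 0 m_gt0.
pose B j := weight m j * coef0 j * L j * (L j - L 0) * (L m + L j) / (2 * (L m - L 0)).
transitivity (\sum_(j < m.+1)
    (if (0 <= j)%N then weight m j * (L j ^+ 2 * coef0 j) else 0)); first by [].
rewrite (telescope_sum_ord m 0 (fun j => weight m j * (L j ^+ 2 * coef0 j)) B) //.
- by rewrite /B subrr !(mulr0, mul0r).
- move=> j /andP [_ jm]; case: (ltngtP j m) => [jm'|mj|->] /=.
  + rewrite /B weightSk // coef0S.
    by field; rewrite ?L_neq0 ?L_add_neq0 ?Lm0 ?(L_sub_neq0 j.+1 0) ?pnatr_eq0.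
  + by rewrite ltnNge jm in mj.
  + rewrite /B (weight_eq0 m m.+1) // !(mulr0, mul0r) subr0.
    by field; rewrite ?L_neq0 ?Lm0 ?pnatr_eq0.
- by rewrite /B weight_eq0 // !mul0r.
Qed.

Lemma weight_coef0_0 : weight 0 0 * coef0 0 = 1.
Proof.
rewrite /weight /coef0 /= /poch !big_ord1 big_ord0 /= subnn fact0 L_def.
by field; rewrite ?N_neq0 ?(gt_eqF alpha_gt0) ?pnatr_eq0.
Qed.

Lemma sum_weight_coef0 n : \sum_(k < n.+1) weight n k * coef0 k = 1.
Proof.
rewrite (sum_weight_by_parts n coef0) big_ord_recl [X in _ + X]big1 ?addr0; last first.
  by move=> m _; rewrite sum_weight_Lsqr_coef0 // mulr0.
rewrite /= big_ord1 /=; transitivity (weight 0 0 * coef0 0); last exact: weight_coef0_0.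
by field; rewrite ?L_neq0 ?L_exp_neq0.
Qed.

Fixpoint coef (s : seq nat) (j : nat) : R :=
  match s with
  | [::] => coef0 j
  | c :: s' => \sum_(k < j.+1) kernel c j k * coef s' k
  end.

Lemma tstar_weight_sum s n : all (fun c => 0 < c)%N s ->
  tstar R N a n s = \sum_(k < n.+1) weight n k * coef s k.
Proof.
elim: s n => [|c s IH] n /=; first by rewrite sum_weight_coef0.
case/andP=> c_gt0 s_pos.
transitivity (\sum_(m < n.+1) \sum_(k < n.+1) (L m ^+ c)^-1 * (weight m k * coef s k)).
  apply: eq_bigr => [[m mn]] _ /=; rewrite lin_exprN IH // big_distrr /=.
  apply: (@sum_ord_widen _ m n (fun k => (L m ^+ c)^-1 * (weight m k * coef s k)))
    => [|k mk]; first by rewrite -ltnS.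
  by rewrite weight_eq0 // mul0r mulr0.
rewrite exchange_big /=.
transitivity (\sum_(k < n.+1) coef s k * \sum_(j < n.+1) weight n j * kernel c j k).
  apply: eq_bigr => k _; rewrite -sum_weight_div_pow // big_distrr /=.
  by apply: eq_bigr => m _; ring.
symmetry; transitivity (\sum_(j < n.+1) \sum_(k < n.+1) weight n j * (kernel c j k * coef s k)).
  apply: eq_bigr => [[j jn]] _ /=; rewrite big_distrr /=.
  apply: (@sum_ord_widen _ j n (fun k => weight n j * (kernel c j k * coef s k)))
    => [|k jk]; first by rewrite -ltnS.
  by rewrite kernel_eq0 // mul0r mulr0.
rewrite exchange_big; apply: eq_bigr => k _; rewrite big_distrr /=.
by apply: eq_bigr => j _; ring.
Qed.

Lemma coef2 s j : coef (2%N :: s) j = coef s j / L j ^+ 2.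
Proof.
transitivity (\sum_(k < j.+1 | k == j :> nat) coef s j / L j ^+ 2); last first.
  by rewrite (big_ord1_eq _ (fun=> coef s j / L j ^+ 2)) ltnSn.
rewrite [RHS]big_mkcond; apply: eq_bigr => k _; rewrite kernel2.
by case: (eqVneq (k : nat) j) => [->|_] /=; rewrite ?mul0r // mulrC.
Qed.

Lemma coef_nseq2 b s j : coef (nseq b 2%N ++ s) j = coef s j / L j ^+ (2 * b).
Proof.
elim: b => [|b IH]; first by rewrite muln0 expr0 divr1.
rewrite (coef2 (nseq b 2%N ++ s)) IH mulnS exprD.
by field; rewrite ?L_neq0 ?L_exp_neq0.
Qed.

Lemma Wrec_ones u l k : (k <= l)%N -> Wrec R N a l k (nseq u 1%N) = Wones u l k.
Proof.
elim: u l => [|u IH] l kl //=.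
rewrite subzn //= -(sum_ord_shift l k (fun j => 2%:R ^+ tri l j / L j * Wones u j k) kl).
apply: eq_bigr => [[i il]] _ /=.
have kil : (k + i <= l)%N by rewrite -leq_subRL // -ltnS.
by rewrite -PoszD lez_nat kil IH ?leq_addr // lin_exprN expr1.
Qed.

Lemma Wsharp_ones u j k : (k <= j)%N -> Wsharp R N a j k (nseq u 1%N) = Wones u j k.
Proof.
move=> kj; rewrite /Wsharp lez_nat kj andbT.
by case: u => [|u] //; exact: Wrec_ones.
Qed.

Definition chain_factor d (c b : nat -> nat) (ks : seq nat) (i : nat) : R :=
  (-1) ^+ (nth 0%N ks i * deltai d c i)
    / lin R N a (nth 0%N ks i) ^ ((2 * b i + 3)%N%:Z - (deltai d c i)%:Z)
    * Wsharp R N a (kprev ks i) (nth 0%N ks i) (nseq (cext d c i - 3) 1%N).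

(* The summand of the theorem is [weight n k_0 * chain_term d c b ks]. *)
Definition chain_term d (c b : nat -> nat) (ks : seq nat) : R :=
  poch (2 * alpha) (nth 0%N ks d) / ((nth 0%N ks d)`!%:R * lin R N a (nth 0%N ks d))
  * \prod_(i < d.+1) chain_factor d c b ks i.

Lemma chain_factor_head d c b k0 ks :
  chain_factor d c b (k0 :: ks) 0 =
  2 * (-1) ^+ (k0 * deltai d c 0) / L k0 ^+ (2 * b 0%N + 3 - deltai d c 0).
Proof.
have dle : (deltai d c 0 <= 2 * b 0%N + 3)%N.
  have := deltaf_le2 (cext d c 1).
  by rewrite /deltai (_ : deltaf (cext d c 0) = 1%N) //; lia.
by rewrite /chain_factor lin_exprB // /Wsharp /= expr1 mulrC mulrA.
Qed.

Lemma chain_factor_kernel d c b k0 k1 t :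
    (k1 <= k0)%N -> (0 < c 1%N)%N -> c 1%N <> 2%N ->
  chain_factor d.+1 c b [:: k0, k1 & t] 0 * chain_factor d.+1 c b [:: k0, k1 & t] 1 =
  (L k0 ^+ (2 * b 0%N))^-1 * kernel (c 1%N) k0 k1 *
  chain_factor d (fun i => c i.+1) (fun i => b i.+1) (k1 :: t) 0.
Proof.
move=> k10 c1_gt0 c1_neq2; rewrite !chain_factor_head /chain_factor.
have -> : deltai d.+1 c 0 = (deltaf (c 1%N)).+1 by [].
have -> : deltai d.+1 c 1 = (deltaf (c 1%N) + deltaf (cext d (fun i => c i.+1) 1))%N by [].
have -> : deltai d (fun i => c i.+1) 0 = (deltaf (cext d (fun i => c i.+1) 1)).+1 by [].
have -> : cext d.+1 c 1 = c 1%N by [].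
have -> : nth 0%N [:: k0, k1 & t] 1 = k1 by [].
rewrite (Wsharp_ones _ k0 k1) //.
have := deltaf_le2 (cext d (fun i => c i.+1) 1).
move: (deltaf (cext d (fun i => c i.+1) 1)) => v v_le2.
case: (c 1%N) c1_gt0 c1_neq2 => [|[|[|u]]] // _ _.
- rewrite kernel1 // (_ : deltaf 1 = 1%N) // lin_exprB; last lia.
  have -> : Wones (1 - 3) k0 k1 = 2%:R ^+ tri k0 k1 by [].
  have -> : (2 * b 0%N + 3 - 2 = (2 * b 0%N).+1)%N by lia.
  rewrite add1n [(-1) ^+ (k0 * 2)]exprM sqrr_sign exprS.
  by field; rewrite ?L_neq0 ?L_exp_neq0.
- rewrite kernelS3 // (_ : deltaf u.+3 = 0%N) // add0n lin_exprB; last lia.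
  have -> : (u.+3 - 3)%N = u by rewrite -addn3 addnK.
  have -> : (2 * b 0%N + 3 - 1 = (2 * b 0%N).+2)%N by lia.
  have -> : (2 * b 1%N + 3 - v = (2 * b 1%N + 3 - v.+1).+1)%N by lia.
  rewrite muln1 mulnS [(-1) ^+ (k0 + k1)]exprD [(-1) ^+ (k1 + _)]exprD.
  (* The right-hand side carries the sign (-1)^k1 twice. *)
  rewrite -[LHS]mul1r -{1}(sign_sqr k1) !exprS.
  by field; rewrite ?L_neq0 ?L_exp_neq0.
Qed.

Lemma chain_term_cons d c b k0 k1 t :
    (k1 <= k0)%N -> (0 < c 1%N)%N -> c 1%N <> 2%N ->
  chain_term d.+1 c b [:: k0, k1 & t] =
  (L k0 ^+ (2 * b 0%N))^-1 * kernel (c 1%N) k0 k1 *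
  chain_term d (fun i => c i.+1) (fun i => b i.+1) (k1 :: t).
Proof.
move=> k10 c1_gt0 c1_neq2.
rewrite /chain_term prodr_ord_recl2 prodr_ord_recl.
have -> : nth 0%N [:: k0, k1 & t] d.+1 = nth 0%N (k1 :: t) d by [].
rewrite (mulrA (chain_factor _ _ _ _ 0)) chain_factor_kernel //.
(* The remaining products agree up to conversion: factor [i.+2] of the longer
   chain is factor [i.+1] of the shorter one. *)
by rewrite [RHS]mulrCA [in RHS](mulrA (_ * kernel _ _ _)).
Qed.

Lemma sum_chain_term d c b k0 :
    (forall i, (1 <= i <= d)%N -> (1 <= c i)%N /\ c i <> 2%N) ->
  \sum_(t <- chains k0 d) chain_term d c b (k0 :: t) = coef (tindex d c b) k0.
Proof.
elim: d c b k0 => [|d IH] c b k0 c_ok.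
  rewrite [chains _ 0]/= big_seq1 /chain_term prodr_ord_recl big_ord0 mulr1.
  rewrite chain_factor_head.
  have -> : deltai 0 c 0 = 3%N by [].
  rewrite [nth _ _ _]/= addnK /tindex [flatten _]/= coef_nseq2 [coef _ _]/= /coef0 linL.
  rewrite exprM exprS sqrr_sign mulr1.
  by field; rewrite ?L_neq0 ?L_exp_neq0 ?natr_fact_neq0.
have [c1_gt0 c1_neq2] := c_ok 1%N isT.
rewrite sum_chainsS tindex_cons coef_nseq2 [coef _ _]/= mulr_suml.
apply: eq_bigr => [[k1 k1k0]] _ /=.
transitivity (\sum_(t <- chains k1 d) (L k0 ^+ (2 * b 0%N))^-1 * kernel (c 1%N) k0 k1 *
    chain_term d (fun i => c i.+1) (fun i => b i.+1) (k1 :: t)).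
  by apply: eq_bigr => t _; rewrite chain_term_cons.
rewrite -big_distrr /= IH; first by ring.
by move=> i /andP [_ i_le]; apply: c_ok; rewrite !ltnS i_le.
Qed.

End Weights.

Theorem mainTheorem4 (R : realFieldType) (a N : nat) (n d : nat)
    (c b : nat -> nat) :
  (1 <= a)%N -> (a <= N)%N ->
  (forall i, (1 <= i <= d)%N -> (1 <= c i)%N /\ c i <> 2%N) ->
  tstar R N a n (tindex d c b) =
  \sum_(ks <- chains n d.+1)
    let k i := nth 0%N ks i in
    (N%:R * (poch (a%:R / N%:R) n.+1) ^+ 2
      / ((n - k 0%N)`!%:R * poch (2 * a%:R / N%:R : R) (n + k 0%N).+1))
    * (poch (2 * a%:R / N%:R : R) (k d) / ((k d)`!%:R * lin R N a (k d)))
    * \prod_(i < d.+1)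
        ((-1) ^+ (k i * deltai d c i)
          / lin R N a (k i) ^ ((2 * b i + 3)%N%:Z - (deltai d c i)%:Z)
          * Wsharp R N a (kprev ks i) (k i) (nseq (cext d c i - 3) 1%N)).
Proof.
move=> a_gt0 a_leN c_ok.
have two_alphaE : 2 * a%:R / N%:R = 2 * @alpha R a N by rewrite /alpha mulrA.
rewrite (tstar_weight_sum a_gt0 a_leN _ _ (tindex_pos d c b c_ok)) sum_chainsS two_alphaE.
apply: eq_bigr => [[k0 k0n]] _ /=.
rewrite -(sum_chain_term a_gt0 a_leN d c b k0 c_ok) big_distrr /=.
apply: eq_bigr => t _; rewrite /weight /chain_term -ltnS k0n mulrA.
reflexivity.
Qed.
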